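(* Let $n\ge 2$, $k>k(n)$, and let $0<z_1<z_2$ be the two positive roots of $z\mapsto H(z,k)$. Then for every $z\in[z_1,z_2]$ the quintuple $(z+1,\,k,\,1,\,z+1,\,k+1)$ is admissible.
   Context: $H(z,k)=-nz^3+(k^2-3n)z^2-(3n+2k)z-(n-1)$; $k(n)=3\sqrt n\cos\big(\tfrac13\arccos(1/\sqrt n)\big)$. A quintuple $(a,b,c,d,\theta)$ is admissible if $d\ge a>c>0$, $\theta>b\ge 0$, and $(a-c)^2\theta^2-a(\theta-b)\big[(2\theta+na)(a-c)+a(n-1)(\theta-b)\big]\ge 0$. *)

From Stdlib Require Import Reals.
Open Scope R_scope.

Definition H (n : R) (z k : R) : R :=
  - n * z ^ 3 + (k ^ 2 - 3 * n) * z ^ 2 - (3 * n + 2 * k) * z - (n - 1).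

Definition kcrit (n : R) : R :=
  3 * sqrt n * cos (/ 3 * acos (/ sqrt n)).

Definition admissible (n : R) (a b c d theta : R) : Prop :=
  d >= a /\ a > c /\ c > 0 /\ theta > b /\ b >= 0 /\
  (a - c) ^ 2 * theta ^ 2
    - a * (theta - b) * ((2 * theta + n * a) * (a - c) + a * (n - 1) * (theta - b))
  >= 0.

From Stdlib Require Import Reals Lra Psatz.
Open Scope R_scope.

(* For the quintuple (z+1, k, 1, z+1, k+1) the admissibility
   inequality reads exactly H(z,k) >= 0 (Lemma [admissible_quantity_is_H]),
   and the sign conditions reduce to z > 0 and k >= 0.  The cubic
   w |-> H(w,k) has leading coefficient -n, so once two distinct roots
   z1, z2 are known it factors as
      H(w,k) = (w - z1)(w - z2)(k^2 - 3n - n(w + z1 + z2))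
   (Lemma [H_two_root_factorization]).  Evaluating at w = 0 gives
   z1 z2 (k^2 - 3n - n(z1+z2)) = -(n-1) < 0, so for positive roots the
   third factor is negative at every w >= 0 (Lemma [H_third_factor_neg]).
   Between the roots the first two factors have product <= 0, hence
   H(z,k) >= 0 on [z1,z2] (Lemma [H_nonneg_between_roots]).  Finally
   k > k(n) > 0 (Lemma [kcrit_pos]) supplies k >= 0. *)

(* The critical value k(n) is positive: sqrt n > 0 and the cosine argument
   lies in [0, pi/3]. *)
Lemma kcrit_pos (n : R) : 1 <= n -> 0 < kcrit n.
Proof.
  intro Hn. unfold kcrit.
  assert (Hsqrt : 0 < sqrt n) by (apply sqrt_lt_R0; lra).
  assert (Hcos : 0 < cos (/ 3 * acos (/ sqrt n))).
  { destruct (acos_bound (/ sqrt n)) as [Hlo Hhi].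
    apply cos_gt_0; pose proof PI_RGT_0; lra. }
  apply Rmult_lt_0_compat; lra.
Qed.

Lemma admissible_quantity_is_H (n z k : R) :
  (z + 1 - 1) ^ 2 * (k + 1) ^ 2
  - (z + 1) * (k + 1 - k)
    * ((2 * (k + 1) + n * (z + 1)) * (z + 1 - 1) + (z + 1) * (n - 1) * (k + 1 - k))
  = H n z k.
Proof. unfold H; ring. Qed.

(* A cubic with leading coefficient -n and two distinct known roots z1, z2
   splits off the linear factors; the remaining root is fixed by Vieta. *)
Lemma H_two_root_factorization (n k z1 z2 : R) :
  z1 <> z2 -> H n z1 k = 0 -> H n z2 k = 0 ->
  forall w, H n w k = (w - z1) * (w - z2) * (k ^ 2 - 3 * n - n * (w + z1 + z2)).
Proof.
  intros Hneq Hr1 Hr2 w.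
  set (E := - n * (z1 ^ 2 + z1 * z2 + z2 ^ 2) + (k ^ 2 - 3 * n) * (z1 + z2)
            - (3 * n + 2 * k)).
  (* E is the divided difference (H(z1) - H(z2)) / (z1 - z2), hence 0. *)
  assert (HE : E = 0).
  { assert (Hdiff : (z1 - z2) * E = H n z1 k - H n z2 k) by (unfold E, H; ring).
    rewrite Hr1, Hr2, Rminus_0_r in Hdiff.
    destruct (Rmult_integral _ _ Hdiff) as [Habs | ]; [lra | assumption]. }
  assert (Hexp : H n w k - (w - z1) * (w - z2) * (k ^ 2 - 3 * n - n * (w + z1 + z2))
                 = H n z1 k + (w - z1) * E) by (unfold E, H; ring).
  rewrite Hr1, HE in Hexp. lra.
Qed.

(* For n > 1 and two positive roots, the third factor is negative on w >= 0:
   at w = 0 the factorization gives z1 z2 * (factor) = H(0,k) = -(n-1). *)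
Lemma H_third_factor_neg (n k z1 z2 : R) :
  1 < n -> 0 < z1 -> 0 < z2 -> z1 <> z2 ->
  H n z1 k = 0 -> H n z2 k = 0 ->
  forall w, 0 <= w -> k ^ 2 - 3 * n - n * (w + z1 + z2) < 0.
Proof.
  intros Hn Hz1 Hz2 Hneq Hr1 Hr2 w Hw.
  pose proof (H_two_root_factorization n k z1 z2 Hneq Hr1 Hr2 0) as Hat0.
  unfold H in Hat0.
  assert (Hprod : z1 * z2 * (k ^ 2 - 3 * n - n * (z1 + z2)) = - (n - 1)) by nra.
  assert (0 < z1 * z2) by nra.
  assert (k ^ 2 - 3 * n - n * (z1 + z2) < 0) by nra.
  nra.
Qed.

Lemma H_nonneg_between_roots (n k z1 z2 : R) :
  1 < n -> 0 < z1 -> z1 < z2 ->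
  H n z1 k = 0 -> H n z2 k = 0 ->
  forall z, z1 <= z <= z2 -> 0 <= H n z k.
Proof.
  intros Hn Hz1 H12 Hr1 Hr2 z [Hlo Hhi].
  assert (Hneq : z1 <> z2) by lra.
  rewrite (H_two_root_factorization n k z1 z2 Hneq Hr1 Hr2 z).
  assert (Hneg : k ^ 2 - 3 * n - n * (z + z1 + z2) < 0)
    by (apply (H_third_factor_neg n k z1 z2); lra).
  assert (0 <= (z - z1) * (z2 - z)) by nra.
  nra.
Qed.

Theorem mainTheorem6 (n : nat) (k z1 z2 : R) :
  (2 <= n)%nat ->
  k > kcrit (INR n) ->
  0 < z1 -> z1 < z2 ->
  H (INR n) z1 k = 0 -> H (INR n) z2 k = 0 ->
  (forall z, 0 < z -> H (INR n) z k = 0 -> z = z1 \/ z = z2) ->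
  forall z, z1 <= z <= z2 ->
    admissible (INR n) (z + 1) k 1 (z + 1) (k + 1).
Proof.
  intros Hn Hk Hz1 H12 Hr1 Hr2 _ z Hz.
  assert (HN : 2 <= INR n) by (apply (le_INR 2 n) in Hn; simpl in Hn; lra).
  assert (Hkpos : 0 < k) by (pose proof (kcrit_pos (INR n) ltac:(lra)); lra).
  pose proof (H_nonneg_between_roots (INR n) k z1 z2 ltac:(lra) Hz1 H12 Hr1 Hr2 z Hz)
    as HHnonneg.
  unfold admissible.
  rewrite admissible_quantity_is_H.
  repeat split; lra.
Qed.
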